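(* Let $K$ be a kernel on $\Omega\subset\mathbb{R}^d$ and either $K$ positive definite and $\lambda>0$, or $K$ strictly positive definite and $\lambda\ge0$. Let $X_n=\{x_1,\dots,x_n\}\subset\Omega$ be pairwise distinct. Then for all $x\in\Omega$ $$P_n^\lambda(x)^2=\|K(\cdot,x)-s_n^\lambda(K(\cdot,x))\|_{\mathcal{H}}^2=K(x,x)-2\sum_{k=1}^n v_k(x)^2+\sum_{k,l=1}^n v_k(x)v_l(x)(v_k,v_l)_{\mathcal{H}} .$$
   Context: A kernel is positive definite if symmetric with positive semidefinite kernel matrices on pairwise distinct points (strictly: positive definite matrices). $\mathcal{H}=\mathcal{H}_K(\Omega)$ is the native space (reproducing kernel Hilbert space) of $K$. With $A=(K(x_i,x_j))_{i,j=1}^n$, the regularized interpolant of $f:\Omega\to\mathbb{R}$ is $s_n^\lambda(f):=\sum_{j=1}^n\alpha_jK(\cdot,x_j)$ with $(A+\lambda I)\alpha=(f(x_1),\dots,f(x_n))^T$. The regularized power function is $P_n^\lambda(x):=\sup_{f\in\mathcal{H},f\ne0}|f(x)-s_n^\lambda(f)(x)|/\|f\|_{\mathcal{H}}$. Let $A+\lambda I=LL^T$ be the Cholesky factorization, $(\beta_{jk}):=L^{-T}$, and $v_k:=\sum_{j=1}^n\beta_{jk}K(\cdot,x_j)$, $1\le k\le n$. *)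

From HB Require Import structures.
From mathcomp Require Import all_boot all_order all_algebra.
From mathcomp Require Import boolp classical_sets reals.
Set Implicit Arguments. Unset Strict Implicit. Unset Printing Implicit Defensive.
Import Order.TTheory GRing.Theory Num.Theory.
Local Open Scope ring_scope.

Section Kernels.
Variables (R : realType) (T : Type).

Definition kernel_symmetric (K : T -> T -> R) : Prop :=
  forall x y, K x y = K y x.

Definition kernel_matrix (K : T -> T -> R) (n : nat) (xs : 'I_n -> T) : 'M[R]_n :=
  \matrix_(i, j) K (xs i) (xs j).

Definition qform (n : nat) (M : 'M[R]_n) (c : 'cV[R]_n) : R :=
  \sum_(i < n) \sum_(j < n) c i 0 * c j 0 * M i j.

Definition pos_def_kernel (K : T -> T -> R) : Prop :=
  kernel_symmetric K /\
  forall (m : nat) (ys : 'I_m -> T), injective ys ->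
    forall c : 'cV[R]_m, 0 <= qform (kernel_matrix K ys) c.

Definition strictly_pos_def_kernel (K : T -> T -> R) : Prop :=
  kernel_symmetric K /\
  forall (m : nat) (ys : 'I_m -> T), injective ys ->
    forall c : 'cV[R]_m, c != 0 -> 0 < qform (kernel_matrix K ys) c.

Definition ksec (K : T -> T -> R) (x : T) : T -> R := fun y => K y x.

(* H (a set of functions T -> R) with inner product ip is a (real) Hilbert space
   of functions on T with reproducing kernel K, i.e. the native space H_K(T). *)
Definition native_space (K : T -> T -> R) (H : set (T -> R))
    (ip : (T -> R) -> (T -> R) -> R) : Prop :=
  [/\
      H (fun=> 0) /\
      (forall (a : R) f g, H f -> H g -> H (fun y => a * f y + g y)),
      (forall f g, H f -> H g -> ip f g = ip g f) /\
      (forall (a : R) f g h, H f -> H g -> H h ->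
          ip (fun y => a * f y + g y) h = a * ip f h + ip g h) /\
      (forall f, H f -> 0 <= ip f f) /\
      (forall f, H f -> ip f f = 0 -> f = fun=> 0),
      (forall u : nat -> (T -> R), (forall k, H (u k)) ->
        (forall e : R, 0 < e -> exists N, forall m k, (N <= m)%N -> (N <= k)%N ->
            Num.sqrt (ip (fun y => u m y - u k y) (fun y => u m y - u k y)) < e) ->
        exists g, H g /\ forall e : R, 0 < e -> exists N, forall m, (N <= m)%N ->
            Num.sqrt (ip (fun y => u m y - g y) (fun y => u m y - g y)) < e),
      (forall x, H (ksec K x)) &
      (forall f x, H f -> ip f (ksec K x) = f x)].

Definition reg_interp (K : T -> T -> R) (n : nat) (xs : 'I_n -> T) (lam : R)
    (f : T -> R) : T -> R :=
  let alpha := invmx (kernel_matrix K xs + lam%:M) *m (\col_i f (xs i)) in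
  fun z => \sum_(j < n) alpha j 0 * K z (xs j).

Definition reg_power (K : T -> T -> R) (H : set (T -> R))
    (ip : (T -> R) -> (T -> R) -> R) (n : nat) (xs : 'I_n -> T) (lam : R)
    (x : T) : R :=
  sup [set r | exists f, [/\ H f, f <> (fun=> 0) &
         r = `|f x - reg_interp K xs lam f x| / Num.sqrt (ip f f)]].

Definition lower_tri_pos (n : nat) (L : 'M[R]_n) : Prop :=
  (forall i j : 'I_n, (i < j)%N -> L i j = 0) /\ (forall i, 0 < L i i).

Definition cholv (K : T -> T -> R) (n : nat) (xs : 'I_n -> T) (L : 'M[R]_n)
    (k : 'I_n) : T -> R :=
  let beta := invmx L^T in
  fun z => \sum_(j < n) beta j k * K z (xs j).

End Kernels.

From HB Require Import structures.
From mathcomp Require Import all_boot all_order all_algebra.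
From mathcomp Require Import boolp classical_sets reals.
From mathcomp Require Import lra ring.
Import Order.TTheory GRing.Theory Num.Theory.
Local Open Scope classical_set_scope.
Local Open Scope ring_scope.
Set Implicit Arguments. Unset Strict Implicit. Unset Printing Implicit Defensive.

(* Since [A + lam I = L L^T], the interpolation matrix inverts to [beta beta^T]
   with [beta = L^-T], and the coefficient [sum_i beta_ik f(x_i)] is [(f, v_k)]
   by the reproducing property; hence [s(f) = sum_k (f, v_k) v_k].  Evaluating
   at [x] and using the reproducing property once more gives
   [f(x) - s(f)(x) = (f, e)] with [e = K(., x) - sum_k v_k(x) v_k], which is
   the error function of [K(., x)].  By Cauchy-Schwarz the power function is
   the norm of this Riesz representer, attained at [f = e], and expanding
   [(e, e)] bilinearly gives the formula. *)

Lemma sup_attained (R : realType) (S : set R) (a : R) :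
  S a -> ubound S a -> sup S = a.
Proof.
move=> Sa ubSa; apply/eqP; rewrite eq_le ge_sup //=; last by exists a.
by apply: sup_upper_bound => //; split; exists a.
Qed.

Section NativeSpace.
Variables (R : realType) (T : Type) (K : T -> T -> R) (H : set (T -> R))
  (ip : (T -> R) -> (T -> R) -> R).
Hypothesis hN : native_space K H ip.

Lemma native_zero : H (fun=> 0).
Proof. by case: hN => -[]. Qed.

Lemma native_lin a f g : H f -> H g -> H (fun y => a * f y + g y).
Proof. by case: hN => -[_ hlin] *; apply: hlin. Qed.

Lemma native_ksec x : H (ksec K x).
Proof. by case: hN. Qed.

Lemma ipC f g : H f -> H g -> ip f g = ip g f.
Proof. by case: hN => _ [hC] *; apply: hC. Qed.

Lemma ip_linl a f g h : H f -> H g -> H h ->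
  ip (fun y => a * f y + g y) h = a * ip f h + ip g h.
Proof. by case: hN => _ [_ [hlin _]] *; apply: hlin. Qed.

Lemma ip_ge0 f : H f -> 0 <= ip f f.
Proof. by case: hN => _ [_ [_ [hge0 _]]] *; apply: hge0. Qed.

Lemma ip_eq0 f : H f -> ip f f = 0 -> f = fun=> 0.
Proof. by case: hN => _ [_ [_ [_ heq0]]] *; apply: heq0. Qed.

Lemma ip_ksec f x : H f -> ip f (ksec K x) = f x.
Proof. by case: hN => _ _ _ _ hrep; apply: hrep. Qed.

Lemma ip_linr a f g h : H f -> H g -> H h ->
  ip h (fun y => a * f y + g y) = a * ip h f + ip h g.
Proof.
by move=> Hf Hg Hh; rewrite ipC ?ip_linl ?(ipC Hh) //; apply: native_lin.
Qed.

Lemma ip0l h : H h -> ip (fun=> 0) h = 0.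
Proof.
move=> Hh; have := ip_linl 1 native_zero native_zero Hh.
have -> : (fun y : T => 1 * 0 + 0) = (fun=> 0 : R).
  by apply: funext => y; rewrite mul1r addr0.
lra.
Qed.

Lemma ip_gt0 f : H f -> f <> (fun=> 0) -> 0 < ip f f.
Proof.
by move=> Hf f0; rewrite lt0r ip_ge0 // andbT; apply/eqP => /(ip_eq0 Hf).
Qed.

Lemma native_sub f g : H f -> H g -> H (fun y => f y - g y).
Proof.
move=> Hf Hg; have -> : (fun y => f y - g y) = (fun y => -1 * g y + f y).
  by apply: funext => y; rewrite mulN1r addrC.
exact: native_lin.
Qed.

Lemma ip_subl f g h : H f -> H g -> H h ->
  ip (fun y => f y - g y) h = ip f h - ip g h.
Proof.
move=> Hf Hg Hh; have -> : (fun y => f y - g y) = (fun y => -1 * g y + f y).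
  by apply: funext => y; rewrite mulN1r addrC.
by rewrite ip_linl // mulN1r addrC.
Qed.

Lemma ip_subr f g h : H f -> H g -> H h ->
  ip h (fun y => f y - g y) = ip h f - ip h g.
Proof.
by move=> Hf Hg Hh; rewrite ipC ?ip_subl ?(ipC Hh) //; apply: native_sub.
Qed.

Section Sums.
Variables (I : Type) (c : I -> R) (v : I -> T -> R).
Hypothesis Hv : forall i, H (v i).

Lemma native_sum r : H (fun y => \sum_(i <- r) c i * v i y).
Proof.
elim: r => [|i r IH].
  by under eq_fun do rewrite big_nil; exact: native_zero.
by under eq_fun do rewrite big_cons; exact: native_lin.
Qed.

Lemma ip_suml r h :
  H h -> ip (fun y => \sum_(i <- r) c i * v i y) h = \sum_(i <- r) c i * ip (v i) h.
Proof.
move=> Hh; elim: r => [|i r IH].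
  by under eq_fun do rewrite big_nil; rewrite big_nil ip0l.
under eq_fun do rewrite big_cons.
by rewrite ip_linl ?IH ?big_cons //; apply: native_sum.
Qed.

Lemma ip_sumr r h :
  H h -> ip h (fun y => \sum_(i <- r) c i * v i y) = \sum_(i <- r) c i * ip h (v i).
Proof.
move=> Hh; rewrite (ipC Hh); last exact: native_sum.
rewrite ip_suml //.
by apply: eq_bigr => i _; rewrite ipC.
Qed.
End Sums.

Lemma ip_CauchySchwarz f g : H f -> H g -> ip f g ^+ 2 <= ip f f * ip g g.
Proof.
move=> Hf Hg; have [g0 | gn0] := eqVneq (ip g g) 0.
  have Z := native_zero.
  by rewrite (ip_eq0 Hg g0) (ipC Hf Z) !ip0l // expr2 mul0r mulr0.
have gg_gt0 : 0 < ip g g by rewrite lt0r gn0 ip_ge0.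
pose t := ip f g / ip g g.
have tgg : t * ip g g = ip f g by rewrite divfK.
have := ip_ge0 (native_lin (- t) Hg Hf).
rewrite ip_linl ?ip_linr ?(ipC Hg Hf) //; last exact: native_lin.
rewrite -tgg => ge0.
have ge0' : 0 <= ip f f - t ^+ 2 * ip g g by nra.
rewrite -subr_ge0.
have -> : ip f f * ip g g - (t * ip g g) ^+ 2 = ip g g * (ip f f - t ^+ 2 * ip g g).
  by ring.
by rewrite mulr_ge0 // ltW.
Qed.

Lemma representer_dual_norm (Lf : (T -> R) -> R) e :
  H e -> (forall f, H f -> Lf f = ip f e) ->
  sup [set r | exists f, [/\ H f, f <> (fun=> 0) &
         r = `|Lf f| / Num.sqrt (ip f f)]] = Num.sqrt (ip e e).
Proof.
move=> He LfE; set S := (X in sup X).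
have ub : ubound S (Num.sqrt (ip e e)).
  move=> _ [f [Hf f0 ->]]; rewrite LfE //.
  rewrite ler_pdivrMr ?sqrtr_gt0 ?ip_gt0 // -sqrtrM ?ip_ge0 // -sqrtr_sqr.
  by rewrite ler_wsqrtr // mulrC ip_CauchySchwarz.
have [e0 | en0] := pselect (e = fun=> 0).
  have Z := native_zero; rewrite e0 ip0l // sqrtr0.
  have /subset_set1[-> | ->] : S `<=` [set 0]; last by rewrite sup1.
  - move=> _ [f [Hf _ ->]].
    by rewrite LfE // e0 (ipC Hf Z) ip0l // normr0 mul0r.
  - by rewrite sup0.
apply: sup_attained ub; exists e; split=> //.
have ee_gt0 := ip_gt0 He en0.
rewrite LfE // ger0_norm ?ip_ge0 //.
by rewrite -{2}(sqr_sqrtr (ltW ee_gt0)) expr2 mulfK // gt_eqF // sqrtr_gt0.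
Qed.

Lemma ip_ksec_sub_sum (I : Type) (r : seq I) (c : I -> R) (v : I -> T -> R) x f :
  (forall i, H (v i)) -> H f ->
  ip f (fun z => ksec K x z - \sum_(i <- r) c i * v i z)
    = f x - \sum_(i <- r) c i * ip f (v i).
Proof.
move=> Hv Hf; have Hx := native_ksec x; have Hs := native_sum c Hv r.
by rewrite ip_subr // ip_ksec // ip_sumr.
Qed.

Lemma ip_ksec_sub_sum_sq (I : Type) (r : seq I) (c : I -> R) (v : I -> T -> R) x :
  (forall i, H (v i)) ->
  let e := fun z => ksec K x z - \sum_(i <- r) c i * v i z in
  ip e e = K x x - 2 * \sum_(i <- r) c i * v i x
           + \sum_(i <- r) \sum_(j <- r) c i * c j * ip (v i) (v j).
Proof.
move=> Hv e; have Hx := native_ksec x; have Hs := native_sum c Hv r.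
have He : H e by apply: native_sub.
rewrite ip_ksec_sub_sum //.
under eq_bigr => i _ do rewrite (ipC He) // ip_ksec_sub_sum // mulrBr mulr_sumr.
rewrite sumrB /e /ksec.
under [X in _ - (_ - X)]eq_bigr => i _ do under eq_bigr do rewrite mulrA.
lra.
Qed.
End NativeSpace.

Lemma lower_tri_pos_unitmx (R : realType) n (L : 'M[R]_n) :
  lower_tri_pos L -> L \in unitmx.
Proof.
case=> upper0 diag_gt0; rewrite unitmxE det_trig; last exact/is_trig_mxP.
by rewrite unitfE gt_eqF // prodr_gt0.
Qed.

Lemma invmx_mul_tr (F : fieldType) n (L : 'M[F]_n) :
  L \in unitmx -> invmx (L *m L^T) = invmx L^T *m (invmx L^T)^T.
Proof.
move=> Lu; have LLu : L *m L^T \in unitmx by rewrite unitmx_mul unitmx_tr Lu.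
have LLinv : L *m L^T *m (invmx L^T *m (invmx L^T)^T) = 1%:M.
  by rewrite trmx_inv trmxK -mulmxA (mulmxA L^T) mulmxV ?unitmx_tr // mul1mx mulmxV.
by rewrite -[RHS]mul1mx -(mulVmx LLu) -mulmxA LLinv mulmx1.
Qed.

Section Interpolation.
Variables (R : realType) (T : Type) (K : T -> T -> R) (H : set (T -> R))
  (ip : (T -> R) -> (T -> R) -> R) (lam : R) (n : nat) (xs : 'I_n -> T)
  (L : 'M[R]_n).
Hypothesis hN : native_space K H ip.

Local Notation beta := (invmx L^T).
Local Notation v := (cholv K xs L).

Lemma native_cholv k : H (v k).
Proof. exact: (native_sum hN _ (fun j => native_ksec hN (xs j))). Qed.

Lemma ip_cholv f k : H f -> ip f (v k) = \sum_j beta j k * f (xs j).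
Proof.
move=> Hf; rewrite (ip_sumr hN _ (fun j => native_ksec hN (xs j))) //.
by apply: eq_bigr => j _; rewrite (ip_ksec hN).
Qed.

Hypothesis hL : lower_tri_pos L.
Hypothesis hM : kernel_matrix K xs + lam%:M = L *m L^T.

Lemma reg_interp_cholv f z :
  H f -> reg_interp K xs lam f z = \sum_k ip f (v k) * v k z.
Proof.
move=> Hf; rewrite /reg_interp /cholv /= hM.
rewrite invmx_mul_tr ?lower_tri_pos_unitmx // -mulmxA.
under [RHS]eq_bigr do rewrite ip_cholv // mulr_sumr.
rewrite exchange_big /=; apply: eq_bigr => j _.
rewrite mxE big_distrl /=; apply: eq_bigr => k _.
rewrite mxE (eq_bigr (fun i => beta i k * f (xs i))) => [|i _]; last by rewrite !mxE.
by rewrite mulrCA mulrA.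
Qed.

Lemma reg_interp_ksec x z :
  reg_interp K xs lam (ksec K x) z = \sum_k v k x * v k z.
Proof.
have Hx := native_ksec hN x.
rewrite reg_interp_cholv //; apply: eq_bigr => k _.
by rewrite (ipC hN Hx (native_cholv k)) (ip_ksec hN _ (native_cholv k)).
Qed.

End Interpolation.

Theorem proposition3p1 (R : realType) (d : nat) (Omega : set 'rV[R]_d)
    (K : {y : 'rV[R]_d | Omega y} -> {y : 'rV[R]_d | Omega y} -> R)
    (H : set ({y : 'rV[R]_d | Omega y} -> R))
    (ip : ({y : 'rV[R]_d | Omega y} -> R) -> ({y : 'rV[R]_d | Omega y} -> R) -> R)
    (lam : R) (n : nat) (xs : 'I_n -> {y : 'rV[R]_d | Omega y})
    (L : 'M[R]_n) :
  (pos_def_kernel K /\ 0 < lam) \/ (strictly_pos_def_kernel K /\ 0 <= lam) ->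
  native_space K H ip ->
  injective xs ->
  lower_tri_pos L ->
  kernel_matrix K xs + lam%:M = L *m L^T ->
  forall x : {y : 'rV[R]_d | Omega y},
    let e := fun z => ksec K x z - reg_interp K xs lam (ksec K x) z in
    reg_power K H ip xs lam x ^+ 2 = ip e e /\
    ip e e = K x x - 2 * \sum_(k < n) cholv K xs L k x ^+ 2
             + \sum_(k < n) \sum_(l < n)
                 cholv K xs L k x * cholv K xs L l x
                 * ip (cholv K xs L k) (cholv K xs L l).
Proof.
(* Definiteness of [K] and distinctness of the nodes only ensure that the
   Cholesky factor [L] exists. *)
move=> _ hN _ hL hM x e.
have Hv := native_cholv xs L hN.
have eE : e = fun z => ksec K x z - \sum_k cholv K xs L k x * cholv K xs L k z.
  by apply: funext => z; rewrite /e (reg_interp_ksec hN hL hM).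
have He : H e.
  by rewrite eE; exact: (native_sub hN (native_ksec hN x) (native_sum hN _ Hv _)).
split.
  rewrite /reg_power (representer_dual_norm hN He) ?sqr_sqrtr ?(ip_ge0 hN He) //.
  move=> f Hf.
  rewrite (reg_interp_cholv hN hL hM) // eE (ip_ksec_sub_sum hN) //.
  by congr (_ - _); apply: eq_bigr => k _; rewrite mulrC.
by rewrite eE (ip_ksec_sub_sum_sq hN).
Qed.
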